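(* Let $\mathcal G\subseteq\mathsf P^n$ be the gauge group of an $n$-qubit subsystem code, with stabilizer group $\mathcal S=\mathcal G^\perp\cap\mathcal G$, dressed logical operators $\mathcal S^\perp$, and distance $d$, the minimal weight of an element of $\mathcal S^\perp\setminus\mathcal G$. Let $\Gamma\subseteq 2^{[n]}$ with $|\gamma|\le\lfloor\frac{d-1}{2}\rfloor$ for all $\gamma\in\Gamma$, and let $P=\mathop{\ast}_{\gamma\in\Gamma}P_\gamma$ where each $P_\gamma$ is a probability distribution on $\mathsf P^n$ supported on Paulis with support in $\gamma$ and with $P_\gamma(I)>\tfrac12$. Then the logical channel $P_L(e)=\frac1{|\mathcal G|}\sum_{g\in\mathcal G}P(eg)$ is uniquely determined by the stabilizer measurement statistics $E(s)=\sum_{e\in\mathsf P^n}\langle s,e\rangle P(e)$, $s\in\mathcal S$ (among all channels of this form with the same $\Gamma$).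
   Context: $\mathsf P^n$ is the $n$-qubit Pauli group modulo phases; $\langle a,e\rangle=+1$ if $a,e$ commute and $-1$ otherwise; $B^\perp=\{a:\langle a,b\rangle=1\ \forall b\in B\}$. A subsystem code is specified by an arbitrary subgroup $\mathcal G\subseteq\mathsf P^n$ (not necessarily with $\mathcal G\subseteq\mathcal G^\perp$). Weight and support of a Pauli: number/set of qubits on which it acts nontrivially. Phenomenological noise: in each round an independent error $e\sim P$ occurs and the measurement of $s\in\mathcal S$ yields $\langle s,e\rangle$. Convolution: $(f\ast g)(e)=\sum_{e'}f(e')g(ee')$. *)

From HB Require Import structures.
From mathcomp Require Import all_boot all_order all_algebra.
Set Implicit Arguments. Unset Strict Implicit. Unset Printing Implicit Defensive.
Import Order.TTheory GRing.Theory Num.Theory.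
Local Open Scope ring_scope.

(* n-qubit Pauli group modulo phases: each qubit carries (x-bit, z-bit);
   (false,false)=I, (true,false)=X, (false,true)=Z, (true,true)=Y. *)
Definition pauli (n : nat) := {ffun 'I_n -> bool * bool}.

Definition pid (n : nat) : pauli n := [ffun _ => (false, false)].

Definition pmul (n : nat) (a b : pauli n) : pauli n :=
  [ffun i => (((a i).1 (+) (b i).1), ((a i).2 (+) (b i).2))].

(* a and e commute iff the symplectic form vanishes *)
Definition pcommute (n : nat) (a e : pauli n) : bool :=
  ~~ odd (\sum_(i < n) (((a i).1 && (e i).2) + ((a i).2 && (e i).1))%N).

Definition psign (R : ringType) (n : nat) (a e : pauli n) : R :=
  if pcommute a e then 1 else -1.

Definition pperp (n : nat) (B : {set pauli n}) : {set pauli n} :=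
  [set a | [forall b in B, pcommute a b]].

Definition psupp (n : nat) (a : pauli n) : {set 'I_n} :=
  [set i | a i != (false, false)].

Definition pweight (n : nat) (a : pauli n) : nat := #|psupp a|.

Definition is_subgroup (n : nat) (G : {set pauli n}) : Prop :=
  pid n \in G /\ (forall a b, a \in G -> b \in G -> pmul a b \in G).

Definition stab (n : nat) (G : {set pauli n}) : {set pauli n} :=
  pperp G :&: G.

Definition is_distance (n : nat) (G : {set pauli n}) (d : nat) : Prop :=
  (exists2 a, a \in pperp (stab G) :\: G & pweight a = d) /\
  (forall a, a \in pperp (stab G) :\: G -> (d <= pweight a)%N).

Definition is_distribution (R : realFieldType) (n : nat) (p : pauli n -> R) : Prop :=
  (forall e, 0 <= p e) /\ \sum_(e : pauli n) p e = 1.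

Definition conv (R : ringType) (n : nat) (f g : pauli n -> R) : pauli n -> R :=
  fun e => \sum_(e' : pauli n) f e' * g (pmul e e').

Definition delta_id (R : ringType) (n : nat) : pauli n -> R :=
  fun e => if e == pid n then 1 else 0.

Definition conv_over (R : ringType) (n : nat) (Gamma : {set {set 'I_n}})
  (Pg : {set 'I_n} -> pauli n -> R) : pauli n -> R :=
  foldr (@conv R n) (@delta_id R n) [seq Pg g | g <- enum Gamma].

Definition logical_channel (R : realFieldType) (n : nat) (G : {set pauli n})
  (P : pauli n -> R) : pauli n -> R :=
  fun e => (#|G|%:R)^-1 * \sum_(g in G) P (pmul e g).

Definition syndrome_stats (R : realFieldType) (n : nat) (P : pauli n -> R) :
  pauli n -> R :=
  fun s => \sum_(e : pauli n) psign R s e * P e.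

Definition local_family (R : realFieldType) (n : nat) (Gamma : {set {set 'I_n}})
  (Pg : {set 'I_n} -> pauli n -> R) : Prop :=
  forall g, g \in Gamma ->
    [/\ is_distribution (Pg g),
        (forall e, Pg g e != 0 -> psupp e \subset g)
      & 2^-1 < Pg g (pid n)].

From mathcomp Require Import all_boot all_order all_algebra ring lra zify.
Import Order.TTheory GRing.Theory Num.Theory.
Local Open Scope ring_scope.
Set Implicit Arguments. Unset Strict Implicit. Unset Printing Implicit Defensive.

(* Write f^ for the character transform [syndrome_stats].  Then P^ is the product of the
   positive functions P_g^ (positive because P_g(I) > 1/2), and the logical channel depends
   only on the restriction of P^ to pperp G.  So it suffices that H = P^ / Q^, which is 1 on
   S by hypothesis, is 1 on pperp G.  Each factor of H only depends on the qubits of one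
   g in Gamma, so the Fourier transform of log H is supported on the set B of Paulis living
   inside some g.  H = 1 on S says that this transform sums to 0 over every coset of
   pperp S; two elements of B in the same coset differ by a dressed operator of weight
   < d, i.e. by an element of G, so every character of pperp G is constant on such a class,
   whence H = 1 on pperp G. *)

Section PauliGroup.
Variable n : nat.
Implicit Types a b c e u : pauli n.

Lemma pmulC a b : pmul a b = pmul b a.
Proof. by apply/ffunP => i; rewrite !ffunE; case: (a i) => [[] []]; case: (b i) => [[] []]. Qed.

Lemma pmulK a b : pmul (pmul a b) b = a.
Proof. by apply/ffunP => i; rewrite !ffunE /=; case: (a i) => [[] []]; case: (b i) => [[] []]. Qed.

Lemma pmulKl a b : pmul a (pmul a b) = b.
Proof. by rewrite pmulC [pmul a b]pmulC pmulK. Qed.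

Lemma pmul_injr u : injective (fun a => pmul a u).
Proof. exact: (can_inj (g := fun a => pmul a u) (fun a => pmulK a u)). Qed.

Lemma pmul1 a : pmul (pid n) a = a.
Proof. by apply/ffunP => i; rewrite !ffunE /=; case: (a i) => [[] []]. Qed.

Lemma pmulxx a : pmul a a = pid n.
Proof. by apply/ffunP => i; rewrite !ffunE /=; case: (a i) => [[] []]. Qed.

Lemma pmul_cancel_mid a b c : pmul (pmul a b) (pmul b c) = pmul a c.
Proof.
by apply/ffunP => i; rewrite !ffunE /=; case: (a i) => [[] []]; case: (b i) => [[] []];
  case: (c i) => [[] []].
Qed.

Lemma psupp_eq0 a : (psupp a == set0) = (a == pid n).
Proof.
apply/eqP/eqP => [Ha|->]; last by apply/setP => i; rewrite !inE ffunE eqxx.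
apply/ffunP => i; rewrite ffunE.
by move/setP: Ha => /(_ i); rewrite !inE => /negbFE /eqP.
Qed.

Lemma pweight_eq0 a : (pweight a == 0%N) = (a == pid n).
Proof. by rewrite /pweight cards_eq0 psupp_eq0. Qed.

Lemma psuppM a b : psupp (pmul a b) \subset psupp a :|: psupp b.
Proof.
apply/subsetP => i; rewrite !inE ffunE; apply: contraR; rewrite negb_or !negbK.
by move=> /andP [/eqP -> /eqP ->].
Qed.

Let sympl a e i : nat := (((a i).1 && (e i).2) + ((a i).2 && (e i).1))%N.

Lemma pcommuteE a e : pcommute a e = ~~ \big[addb/false]_(i < n) odd (sympl a e i).
Proof. by rewrite /pcommute (big_morph odd oddD (erefl _)). Qed.

Lemma pcommuteC a e : pcommute a e = pcommute e a.
Proof.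
rewrite !pcommuteE; congr (~~ _); apply: eq_bigr => i _; rewrite /sympl.
by case: (a i) => [[] []]; case: (e i) => [[] []].
Qed.

Lemma pcommuteM a b c : pcommute a (pmul b c) = (pcommute a b == pcommute a c).
Proof.
rewrite !pcommuteE.
have -> : \big[addb/false]_(i < n) odd (sympl a (pmul b c) i) =
          \big[addb/false]_(i < n) odd (sympl a b i) (+) \big[addb/false]_(i < n) odd (sympl a c i).
  rewrite -big_split; apply: eq_bigr => i _; rewrite /sympl !ffunE /=.
  by case: (a i) => [[] []]; case: (b i) => [[] []]; case: (c i) => [[] []].
by case: (\big[addb/false]_(i < n) _); case: (\big[addb/false]_(i < n) _).
Qed.

Lemma pcommute_disjoint a e : [disjoint psupp a & psupp e] -> pcommute a e.
Proof.
move=> /pred0P dis; rewrite pcommuteE big1 // => i _; have := dis i; rewrite /= !inE /sympl.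
by case: (a i) => [[] []]; case: (e i) => [[] []].
Qed.

Lemma pcommute1 a : pcommute a (pid n).
Proof. by apply: pcommute_disjoint; apply/pred0P => i; rewrite /= !inE ffunE eqxx andbF. Qed.

Lemma anticommuting_at b i : i \in psupp b ->
  exists2 u, psupp u \subset [set i] & ~~ pcommute u b.
Proof.
move=> bi; pose u : pauli n := [ffun j => if j == i then (~~ (b i).1, (b i).1) else (false, false)].
exists u; first by apply/subsetP => j; rewrite !inE ffunE; case: (j =P i).
rewrite pcommuteE negbK (bigD1 i) //= big1 => [|j /negbTE ji]; last by rewrite /sympl !ffunE ji.
by move: bi; rewrite /sympl ffunE eqxx inE; case: (b i) => [[] []].
Qed.

Lemma pperpT : pperp [set: pauli n] = [set pid n].
Proof.
apply/setP => a; rewrite !inE; apply/forallP/eqP => [Ha|-> b]; last first.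
  by rewrite pcommuteC pcommute1 implybT.
apply/eqP; rewrite -psupp_eq0; apply/set0Pn => -[i /anticommuting_at [u _]].
by rewrite pcommuteC; move: (Ha u); rewrite inE /= => ->.
Qed.

Lemma pperp_subgroup (B : {set pauli n}) : is_subgroup (pperp B).
Proof.
split; first by rewrite inE; apply/forall_inP => b _; rewrite pcommuteC pcommute1.
move=> a a'; rewrite !inE => /forall_inP Ha /forall_inP Ha'; apply/forall_inP => b Hb.
by rewrite pcommuteC pcommuteM !(pcommuteC b) Ha ?Ha'.
Qed.

Lemma stab_subgroup (G : {set pauli n}) : is_subgroup G -> is_subgroup (stab G).
Proof.
case=> G1 GM; have [P1 PM] := pperp_subgroup G.
split=> [|a b]; rewrite /stab !in_setI; first by rewrite P1 G1.
by move=> /andP [Pa Ga] /andP [Pb Gb]; rewrite PM ?GM.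
Qed.

End PauliGroup.

Section Characters.
Variables (R : nzRingType) (n : nat).
Implicit Types a b c : pauli n.

Lemma psignM a b c : psign R a (pmul b c) = psign R a b * psign R a c.
Proof.
rewrite /psign pcommuteM.
by case: (pcommute a b); case: (pcommute a c); rewrite /= ?mulr1 ?mul1r ?mulN1r ?opprK.
Qed.

Lemma psignC a b : psign R a b = psign R b a.
Proof. by rewrite /psign pcommuteC. Qed.

Lemma psignMl a b c : psign R (pmul a b) c = psign R a c * psign R b c.
Proof. by rewrite psignC psignM !(psignC c). Qed.

Lemma psign1 a : psign R a (pid n) = 1.
Proof. by rewrite /psign pcommute1. Qed.

End Characters.

Section CharacterSums.
Variables (R : numDomainType) (n : nat).
Implicit Types a b w x y : pauli n.

Lemma sum_psign_closed (T : {set pauli n}) w :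
  {in T &, forall a b, pmul a b \in T} ->
  \sum_(s in T) psign R s w = if w \in pperp T then #|T|%:R else 0.
Proof.
move=> TM; case: ifP => [|/negbT]; rewrite inE.
  move=> /forall_inP Tw; rewrite -sumr_const; apply: eq_bigr => s Ts.
  by rewrite /psign pcommuteC Tw.
move=> /forall_inPn [u Tu wu].
set S := \sum_(s in T) _.
(* translation by an element u of T anticommuting with w flips every sign *)
have SN : S = - S.
  rewrite {1}/S (reindex_inj (@pmul_injr n u)) /= -sumrN.
  apply: eq_big => [s|s _]; last first.
    by rewrite psignMl [psign R u w]/psign pcommuteC (negbTE wu) mulrN1.
  by apply/idP/idP => [/(TM _ _)/(_ Tu)|Ts]; [rewrite pmulK | rewrite TM].
by apply/eqP; rewrite -[_ == 0](mulrn_eq0 S 2) mulr2n {1}SN addNr.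
Qed.

Lemma sum_psign w : \sum_s psign R s w = if w == pid n then #|{: pauli n}|%:R else 0.
Proof.
have := @sum_psign_closed [set: pauli n] w (fun _ _ _ _ => in_setT _).
rewrite pperpT inE cardsT => <-; apply: eq_bigl => s; by rewrite inE.
Qed.

Lemma sum_psign2 x y :
  \sum_b psign R b x * psign R b y = if x == y then #|{: pauli n}|%:R else 0.
Proof.
have -> : (x == y) = (pmul x y == pid n).
  by apply/eqP/eqP => [->|xy]; [rewrite pmulxx | rewrite -(pmulKl x y) xy pmulC pmul1].
by rewrite -sum_psign; apply: eq_bigr => b _; rewrite psignM.
Qed.

End CharacterSums.

Section SyndromeStatistics.
Variables (R : realFieldType) (n : nat).
Implicit Types (f g p : pauli n -> R) (x u : pauli n).

Lemma syndrome_stats_delta x : syndrome_stats (@delta_id R n) x = 1.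
Proof.
rewrite /syndrome_stats (bigD1 (pid n)) //= big1 ?addr0.
  by rewrite /delta_id eqxx psign1 mulr1.
by move=> e /negbTE e1; rewrite /delta_id e1 mulr0.
Qed.

Lemma syndrome_stats_conv f g x :
  syndrome_stats (conv f g) x = syndrome_stats f x * syndrome_stats g x.
Proof.
rewrite /syndrome_stats /conv mulr_suml; under eq_bigr do rewrite mulr_sumr.
rewrite exchange_big /=; apply: eq_bigr => e' _.
rewrite (reindex_inj (@pmul_injr n e')) /= mulr_sumr; apply: eq_bigr => e _.
by rewrite pmulK psignM; ring.
Qed.

Lemma syndrome_stats_conv_over (Gamma : {set {set 'I_n}}) (Pg : {set 'I_n} -> pauli n -> R) x :
  syndrome_stats (conv_over Gamma Pg) x = \prod_(g in Gamma) syndrome_stats (Pg g) x.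
Proof.
rewrite /conv_over -big_enum /=; elim: (enum Gamma) => [|g l IH] /=.
  by rewrite big_nil syndrome_stats_delta.
by rewrite big_cons syndrome_stats_conv IH.
Qed.

Lemma syndrome_stats_gt0 p x :
  is_distribution p -> 2^-1 < p (pid n) -> 0 < syndrome_stats p x.
Proof.
move=> [p_ge0 p_sum1] p1.
have rest : \sum_(e | e != pid n) p e = 1 - p (pid n).
  by rewrite -p_sum1 [in RHS](bigD1 (pid n)) //= addrC addrK.
suff : p (pid n) - \sum_(e | e != pid n) p e <= syndrome_stats p x by rewrite rest; lra.
rewrite /syndrome_stats [leRHS](bigD1 (pid n)) //= psign1 mul1r lerD2l -sumrN.
apply: ler_sum => e _; rewrite /psign; case: pcommute; rewrite ?mul1r ?mulN1r //.
by rewrite (le_trans _ (p_ge0 e)) // oppr_le0.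
Qed.

Lemma syndrome_stats_local p (gm : {set 'I_n}) x u :
  (forall e, p e != 0 -> psupp e \subset gm) -> [disjoint psupp u & gm] ->
  syndrome_stats p (pmul x u) = syndrome_stats p x.
Proof.
move=> p_supp u_gm; apply: eq_bigr => e _.
have [->|pe] := eqVneq (p e) 0; first by rewrite !mulr0.
rewrite psignMl [psign R u e]/psign pcommute_disjoint ?mulr1 //.
exact: disjointWr (p_supp e pe) u_gm.
Qed.

Lemma syndrome_statsK f x :
  f x * #|{: pauli n}|%:R = \sum_c psign R c x * syndrome_stats f c.
Proof.
rewrite /syndrome_stats; under eq_bigr do rewrite mulr_sumr.
rewrite exchange_big /= (bigD1 x) //= [X in _ + X]big1 ?addr0 => [|y yx].
  by under eq_bigr do rewrite mulrA; rewrite -mulr_suml sum_psign2 eqxx mulrC.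
by under eq_bigr do rewrite mulrA; rewrite -mulr_suml sum_psign2 eq_sym (negbTE yx) mul0r.
Qed.

(* Averaging over G kills every character outside pperp G. *)
Lemma logical_channel_eq (G : {set pauli n}) (P Q : pauli n -> R) :
  {in G &, forall a b, pmul a b \in G} ->
  {in pperp G, forall c, syndrome_stats P c = syndrome_stats Q c} ->
  forall e, logical_channel G P e = logical_channel G Q e.
Proof.
move=> GM PQ e; rewrite /logical_channel; congr (_ * _).
have M_neq0 : (#|{: pauli n}|%:R : R) != 0.
  by rewrite pnatr_eq0 -lt0n; apply/card_gt0P; exists (pid n).
apply: (mulIf M_neq0); rewrite !mulr_suml.
have average P' : \sum_(g in G) P' (pmul e g) * #|{: pauli n}|%:R =
    \sum_c psign R c e * syndrome_stats P' c * \sum_(g in G) psign R g c.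
  under eq_bigr do rewrite syndrome_statsK.
  rewrite exchange_big /=; apply: eq_bigr => c _; rewrite mulr_sumr.
  by apply: eq_bigr => g _; rewrite psignM (psignC _ g); ring.
rewrite !average; apply: eq_bigr => c _; rewrite sum_psign_closed //.
by case: ifP => Gc; rewrite ?mulr0 // PQ.
Qed.

End SyndromeStatistics.

Lemma gt0_expr_eq1 (R : numDomainType) (k : R) m : 0 < k -> (0 < m)%N -> k ^+ m = 1 -> k = 1.
Proof. by move=> k_gt0 m_gt0 /eqP; rewrite pexpr_eq1 ?ltW // => /eqP. Qed.

Section IntegerPowers.
Variable R : fieldType.

Lemma prodXz (I : Type) (r : seq I) (P : pred I) (F : I -> R) (z : int) :
  (\prod_(i <- r | P i) F i) ^ z = \prod_(i <- r | P i) F i ^ z.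
Proof. exact: (big_morph (fun x => x ^ z) (fun x y => expfzMl x y z) (exp1rz _ z)). Qed.

Lemma prod_exprz_exchange (I J : finType) (P : pred I) (X : J -> R) (F : I -> J -> int)
    (z : I -> int) :
  (forall j, X j != 0) ->
  \prod_(i | P i) (\prod_j X j ^ F i j) ^ z i = \prod_j X j ^ (\sum_(i | P i) F i j * z i).
Proof.
move=> X_neq0; under eq_bigr do rewrite prodXz; under eq_bigr do under eq_bigr do rewrite exprz_exp.
rewrite exchange_big; apply: eq_bigr => j _; symmetry.
exact: (big_morph (fun k => X j ^ k) (fun k l => expfzDr k l (X_neq0 j)) (expr0z _)).
Qed.

End IntegerPowers.

Section MultiplicativeFourier.
Variables (R : realFieldType) (n : nat).
Implicit Types (h : pauli n -> R) (b c x y : pauli n).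

(* R has no logarithm: [mfourier h b] stands for
   exp (#|P^n| * (Fourier coefficient of log h at b)). *)
Definition mfourier h b : R := \prod_x h x ^ psign int x b.

Lemma mfourier_gt0 h b : (forall x, 0 < h x) -> 0 < mfourier h b.
Proof. by move=> h_gt0; apply: prodr_gt0 => x _; apply: exprz_gt0. Qed.

Lemma mfourier_prod h (I : Type) (r : seq I) (P : pred I) (hs : I -> pauli n -> R) b :
  (forall x, h x = \prod_(i <- r | P i) hs i x) ->
  mfourier h b = \prod_(i <- r | P i) mfourier (hs i) b.
Proof.
move=> hE; rewrite /mfourier; under eq_bigr do rewrite hE prodXz.
exact: exchange_big.
Qed.

Lemma mfourierK h y : (forall x, h x != 0) ->
  \prod_b mfourier h b ^ psign int y b = h y ^+ #|{: pauli n}|.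
Proof.
move=> h_neq0; rewrite prod_exprz_exchange //.
have sum_b x : \sum_b psign int x b * psign int y b = if x == y then #|{: pauli n}|%:R else 0.
  by rewrite -sum_psign2; apply: eq_bigr => b _; rewrite !(psignC _ b).
rewrite (bigD1 y) //= sum_b eqxx natz big1 ?mulr1 // => x xy.
by rewrite sum_b (negbTE xy) expr0z.
Qed.

Lemma mfourier_periodic h u b : (forall x, 0 < h x) ->
  (forall x, h (pmul x u) = h x) -> ~~ pcommute u b -> mfourier h b = 1.
Proof.
move=> h_gt0 hu ub; have k_gt0 := mfourier_gt0 b h_gt0.
have kV : mfourier h b = (mfourier h b)^-1.
  rewrite {1}/mfourier (reindex_inj (@pmul_injr n u)) -prodfV; apply: eq_bigr => x _.
  by rewrite /= hu psignMl [psign int u b]/psign (negbTE ub) mulrN1 invr_expz.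
apply: (gt0_expr_eq1 k_gt0 (isT : 0 < 2)%N).
by rewrite expr2 {1}kV mulVf // gt_eqF.
Qed.

Lemma prod_mfourier_coset h (S : {set pauli n}) b0 : (forall x, 0 < h x) ->
  is_subgroup S -> {in S, forall s, h s = 1} ->
  \prod_(b | pmul b b0 \in pperp S) mfourier h b = 1.
Proof.
move=> h_gt0 S_grp hS; have [S1 SM] := S_grp.
have S_gt0 : (0 < #|S|)%N by apply/card_gt0P; exists (pid n).
apply: (gt0_expr_eq1 _ S_gt0); first by apply: prodr_gt0 => b _; apply: mfourier_gt0.
rewrite -prodrXl.
transitivity (\prod_b mfourier h b ^ (\sum_(s in S) psign int s b * psign int s b0)).
  rewrite big_mkcond /=; apply: eq_bigr => b _.
  have -> : \sum_(s in S) psign int s b * psign int s b0 =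
            if pmul b b0 \in pperp S then #|S|%:R else 0.
    by rewrite -sum_psign_closed //; apply: eq_bigr => s _; rewrite psignM.
  by case: ifP; rewrite ?natz ?expr0z.
rewrite -prod_exprz_exchange => [|b]; last by rewrite gt_eqF ?mfourier_gt0.
apply: big1 => s Ss; rewrite mfourierK => [|x]; last by rewrite gt_eqF.
by rewrite hS // expr1n exp1rz.
Qed.

(* Inside a coset of pperp S the characters of c agree on B, and by the previous lemma the
   coefficients of h over each coset multiply to 1. *)
Lemma mfourier_eq1 h (S B : {set pauli n}) c : (forall x, 0 < h x) ->
  is_subgroup S -> {in S, forall s, h s = 1} ->
  (forall b, b \notin B -> mfourier h b = 1) ->
  {in B &, forall b b', pmul b b' \in pperp S -> pcommute c (pmul b b')} ->
  h c = 1.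
Proof.
move=> h_gt0 S_grp hS hB Bc; have [P1 PM] := pperp_subgroup S.
pose coset b b' := pmul b b' \in pperp S.
have coset_eqv : {in B & &, equivalence_rel coset}.
  move=> x y z _ _ _; rewrite /coset pmulxx P1; split=> // xy.
  apply/idP/idP => [xz|yz]; first by rewrite -(pmul_cancel_mid y x z) PM // pmulC.
  by rewrite -(pmul_cancel_mid x y z) PM.
have M_gt0 : (0 < #|{: pauli n}|)%N by apply/card_gt0P; exists (pid n).
apply: (gt0_expr_eq1 (h_gt0 c) M_gt0).
rewrite -mfourierK => [|x]; last by rewrite gt_eqF.
rewrite (bigID (mem B)) /= [X in _ * X]big1 ?mulr1 => [|b /hB ->]; last by rewrite exp1rz.
rewrite (set_partition_big _ (equivalence_partitionP coset_eqv)) /=.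
apply: big1 => _ /imsetP [b0 Bb0 ->].
rewrite (eq_bigr (fun b => mfourier h b ^ psign int c b0)) => [|b]; last first.
  rewrite inE => /andP [Bb b0b]; congr (_ ^ _).
  by rewrite -{1}(pmulKl b0 b) psignM [psign int c (pmul b0 b)]/psign Bc // mulr1.
rewrite -prodXz; suff -> : \prod_(b in [set y in B | coset b0 y]) mfourier h b = 1.
  exact: exp1rz.
transitivity (\prod_(b | pmul b b0 \in pperp S) mfourier h b); last exact: prod_mfourier_coset.
rewrite [RHS](bigID (mem B)) /=.
rewrite [X in _ = _ * X]big1 ?mulr1 => [|b /andP [_ /hB] //].
by apply: eq_bigl => b; rewrite inE andbC /coset pmulC.
Qed.

End MultiplicativeFourier.

Lemma dressed_low_weight_in_gauge n (G : {set pauli n}) d (a b : pauli n) :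
  is_subgroup G -> is_distance G d ->
  (pweight a <= (d.-1)./2)%N -> (pweight b <= (d.-1)./2)%N ->
  pmul a b \in pperp (stab G) -> pmul a b \in G.
Proof.
move=> [G1 _] [_ d_min] wa wb ab_dressed; apply: contraT => abG.
have ab_gt0 : (0 < pweight (pmul a b))%N.
  by rewrite lt0n pweight_eq0; apply: contraNneq abG => ->.
have := d_min (pmul a b); rewrite in_setD abG ab_dressed => /(_ isT) d_le.
have := subset_leq_card (psuppM a b); rewrite cardsU.
move: ab_gt0 wa wb d_le; rewrite /pweight -divn2; lia.
Qed.

Section LocalFamilies.
Variables (R : realFieldType) (n : nat) (Gamma : {set {set 'I_n}}).
Implicit Types Pg Qg : {set 'I_n} -> pauli n -> R.

Lemma syndrome_stats_conv_over_gt0 Pg x :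
  local_family Gamma Pg -> 0 < syndrome_stats (conv_over Gamma Pg) x.
Proof.
move=> HP; rewrite syndrome_stats_conv_over; apply: prodr_gt0 => g /HP [Pd _ P1].
exact: syndrome_stats_gt0 Pd P1.
Qed.

Lemma mfourier_ratio_local Pg Qg b :
  local_family Gamma Pg -> local_family Gamma Qg ->
  ~~ [exists g in Gamma, psupp b \subset g] ->
  mfourier (fun x => syndrome_stats (conv_over Gamma Pg) x /
                     syndrome_stats (conv_over Gamma Qg) x) b = 1.
Proof.
move=> HP HQ /exists_inPn b_spread.
rewrite (mfourier_prod (r := index_enum _) (P := fun g => g \in Gamma)
  (hs := fun g x => syndrome_stats (Pg g) x / syndrome_stats (Qg g) x)) => [|x]; last first.
  by rewrite !syndrome_stats_conv_over prodf_div.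
apply: big1 => g Gg; have [PgD Pg_supp Pg1] := HP g Gg; have [QgD Qg_supp Qg1] := HQ g Gg.
have /subsetPn [i bi ig] := b_spread g Gg.
have [u u_i ub] := anticommuting_at bi.
have u_g : [disjoint psupp u & g] by rewrite (disjointWl u_i) // disjoints1.
apply: (mfourier_periodic _ _ ub) => x.
  by apply: divr_gt0; [apply: syndrome_stats_gt0 PgD Pg1 | apply: syndrome_stats_gt0 QgD Qg1].
by rewrite (syndrome_stats_local _ Pg_supp u_g) (syndrome_stats_local _ Qg_supp u_g).
Qed.

End LocalFamilies.

Theorem corollary1 (R : realFieldType) (n : nat) (G : {set pauli n}) (d : nat)
  (Gamma : {set {set 'I_n}}) (Pg Qg : {set 'I_n} -> pauli n -> R) :
  is_subgroup G ->
  is_distance G d ->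
  (forall g, g \in Gamma -> (#|g| <= (d.-1)./2)%N) ->
  local_family Gamma Pg ->
  local_family Gamma Qg ->
  (forall s, s \in stab G ->
     syndrome_stats (conv_over Gamma Pg) s = syndrome_stats (conv_over Gamma Qg) s) ->
  forall e, logical_channel G (conv_over Gamma Pg) e = logical_channel G (conv_over Gamma Qg) e.
Proof.
move=> G_grp G_dist Gamma_small HP HQ stats.
apply: logical_channel_eq => [a b Ga Gb|c Gc]; first by case: G_grp => _; apply.
pose H x := syndrome_stats (conv_over Gamma Pg) x / syndrome_stats (conv_over Gamma Qg) x.
pose B := [set b | [exists g in Gamma, psupp b \subset g]].
have B_low b : b \in B -> (pweight b <= (d.-1)./2)%N.
  rewrite inE => /exists_inP [g Gg bg].
  exact: leq_trans (subset_leq_card bg) (Gamma_small g Gg).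
apply: divr1_eq; rewrite -/(H c).
apply: (mfourier_eq1 (h := H) (S := stab G) (B := B)).
- by move=> x; apply: divr_gt0; apply: syndrome_stats_conv_over_gt0.
- exact: stab_subgroup.
- by move=> s Ss; rewrite /H stats // divff // gt_eqF // syndrome_stats_conv_over_gt0.
- by move=> b; rewrite inE; apply: mfourier_ratio_local.
- move=> b b' Bb Bb' dressed; move: Gc; rewrite inE => /forall_inP; apply.
  exact: dressed_low_weight_in_gauge (B_low _ Bb) (B_low _ Bb') dressed.
Qed.
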